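(* Let $G$ be a simple bipartite graph with bipartition $\{X,Y\}$ and let $c,k$ be integers such that $3\le c\le \deg_G(x)\le k$ for every $x\in X$, and $|N_G(y)\cap N_G(z)|\ge k$ for every pair of distinct $y,z\in Y$. Then: (i) $|N_G(y)|\ge \frac{k(|Y|-1)}{k-1}$ for every $y\in Y$; (ii) $|N_G(B)\cap N_G(Y\setminus B)|\ge \frac{2|B|(|Y|-|B|)}{k-1}$ for every $B\subseteq Y$; (iii) if $|Y|\ge \mu(k-1)(2^{k-c-1}-2^c+1)$, where $\mu=\max_{u\in X}|\{v\in X: N_G(u)=N_G(v)\}|$, then $G$ has a spanning tree $F$ with $\deg_F(x)\le 2$ for every $x\in X$.
   Context: $N_G(A)$ denotes the set of vertices having a neighbor in $A$, and $N_G(x)=N_G(\{x\})$. *)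

From HB Require Import structures.
From mathcomp Require Import all_boot all_order all_algebra.
Set Implicit Arguments. Unset Strict Implicit. Unset Printing Implicit Defensive.
Import Order.TTheory GRing.Theory Num.Theory.

Definition simple_graph (V : finType) (G : rel V) : Prop :=
  symmetric G /\ irreflexive G.

Definition nbhd (V : finType) (G : rel V) (A : {set V}) : {set V} :=
  [set v | [exists a in A, G a v]].

Definition nbhd1 (V : finType) (G : rel V) (x : V) : {set V} :=
  nbhd G [set x].

Definition deg (V : finType) (G : rel V) (x : V) : nat := #|nbhd1 G x|.

Definition bipartition (V : finType) (G : rel V) (X Y : {set V}) : Prop :=
  [/\ X :&: Y = set0, X :|: Y = setT &
      forall u v, G u v -> (u \in X) && (v \in Y) || (u \in Y) && (v \in X)].

Definition subgraph (V : finType) (F G : rel V) : Prop :=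
  forall u v, F u v -> G u v.

Definition connected_graph (V : finType) (F : rel V) : Prop :=
  forall u v, connect F u v.

Definition has_cycle (V : finType) (F : rel V) : Prop :=
  exists (x : V) (p : seq V),
    [/\ uniq (x :: p), 2 <= size p, path F x p & F (last x p) x].

Definition is_tree (V : finType) (F : rel V) : Prop :=
  [/\ simple_graph F, connected_graph F & ~ has_cycle F].

Definition spanning_tree (V : finType) (G F : rel V) : Prop :=
  subgraph F G /\ is_tree F.

(* mu = max_{u in X} |{v in X : N_G(u) = N_G(v)}|  (0 if X is empty) *)
Definition mu (V : finType) (G : rel V) (X : {set V}) : nat :=
  \max_(u in X) #|[set v in X | nbhd1 G u == nbhd1 G v]|.

(* Every x in X sees at most k vertices of Y, while any two vertices of Y have at
   least k common neighbours; double counting the pairs (y, z) of Y through their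
   common neighbours gives (i) and (ii).  For (iii) a tree is grown greedily: if it
   spans S of Y and U of X with |U| < |S|, then for z in Y outside S the counting
   behind (i) gives more than |S| common neighbours of z and S, so one of them, x,
   is new, and the path y - x - z (y in S) is attached, keeping deg x = 2.  Once Y
   is covered, each remaining vertex of X is hung from one of its neighbours. *)

From HB Require Import structures.
From mathcomp Require Import all_boot all_order all_algebra zify.
Import Order.TTheory GRing.Theory Num.Theory.

Set Implicit Arguments.
Unset Strict Implicit.
Unset Printing Implicit Defensive.

Lemma uniq_cycle_nbrs (T : eqType) (e : rel T) (c : seq T) (v : T) :
  uniq c -> 2 < size c -> cycle e c -> v \in c ->
  exists a b, [/\ a != b, e v a & e b v].
Proof.
move=> uc sc cc vc; case: (rot_to vc) => i s rot_c.
move: uc sc cc; rewrite -(rot_uniq i) -(size_rot i) -(rot_cycle i) rot_c {rot_c}.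
case: s => [|a [|b s]] //= /and3P[_ aNbs _] _ /andP[eva].
rewrite rcons_path /= => /and3P[_ _ elv]; exists a, (last b s); split=> //.
by apply: contraNneq aNbs => ->; rewrite mem_last.
Qed.

Lemma double_mul_le (a b k : nat) :
  0 < a -> 0 < b -> a + b <= k -> 2 * (a * b) <= k * (k - 1).
Proof.
move=> a_gt0 b_gt0 abk.
have : (a + b) * (a + b - 1) <= k * (k - 1) by rewrite leq_mul // leq_sub2r.
by apply: leq_trans; nia.
Qed.

Lemma card_setD1_lt (T : finType) (A : {set T}) x : x \in A -> #|A :\ x| < #|A|.
Proof. by move=> xA; rewrite (cardsD1 x A) xA. Qed.

Lemma card_setE (T : finType) (P : pred T) : #|[set x | P x]| = \sum_x P x.
Proof. by rewrite -sum1dep_card big_mkcond; apply: eq_bigr => x _; case: (P x). Qed.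

Section Neighbourhoods.
Variables (V : finType) (G : rel V).

Lemma in_nbhd1 x u : (u \in nbhd1 G x) = G x u.
Proof.
rewrite inE; apply/existsP/idP => [[a /andP[/set1P-> //]]|Gxu].
by exists x; rewrite set11.
Qed.

Lemma in_nbhd_card (A : {set V}) x : (x \in nbhd G A) = (0 < #|[set a in A | G a x]|).
Proof.
by rewrite inE card_gt0; apply/existsP/set0Pn => -[a aAx]; exists a; rewrite inE in aAx *.
Qed.

Lemma double_count (A B : {set V}) :
  \sum_(y in A) \sum_(z in B) #|[set x | G y x && G z x]| =
  \sum_x #|[set y in A | G y x]| * #|[set z in B | G z x]|.
Proof.
under [RHS]eq_bigr do rewrite !card_setE big_distrlr /=.
rewrite [RHS]exchange_big big_mkcond /=; apply: eq_bigr => y _.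
case: (y \in A) => /=; last by rewrite big1 // => x _; rewrite big1.
rewrite [RHS]exchange_big big_mkcond /=; apply: eq_bigr => z _.
case: (z \in B) => /=; last by rewrite big1 // => x _; rewrite muln0.
by rewrite card_setE; apply: eq_bigr => x _; case: (G y x); case: (G z x).
Qed.

End Neighbourhoods.

Section Trees.
Variable V : finType.
Implicit Types (F : rel V) (W : {set V}) (a b u v w : V).

Definition tree_on F W : Prop :=
  [/\ simple_graph F, (forall a b, F a b -> a \in W),
      {in W &, forall a b, connect F a b} & ~ has_cycle F].

Definition add_edge F v w : rel V :=
  fun a b => [|| F a b, (a == v) && (b == w) | (a == w) && (b == v)].

Lemma add_edge_sym F v w : symmetric F -> symmetric (add_edge F v w).
Proof.
move=> Fsym a b; rewrite /add_edge Fsym [X in _ || X]orbC.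
by rewrite (andbC (a == w)) (andbC (a == v)).
Qed.

Lemma deg_add_edge_le F v w a : deg (add_edge F v w) a <= (deg F a).+1.
Proof.
pose o := if a == v then w else v.
have sub : nbhd1 (add_edge F v w) a \subset o |: nbhd1 F a.
  apply/subsetP => u; rewrite in_nbhd1 in_setU1 in_nbhd1 /add_edge /o.
  case/or3P=> [->|/andP[/eqP-> /eqP->]|/andP[/eqP-> /eqP->]]; rewrite ?orbT ?eqxx //.
  by case: (w =P v) => [->|_]; rewrite eqxx.
by rewrite /deg (leq_trans (subset_leq_card sub)) // cardsU1 -add1n leq_add2r leq_b1.
Qed.

Lemma deg_add_edge_other F v w a :
  a != v -> a != w -> deg (add_edge F v w) a = deg F a.
Proof.
move=> av aw; apply: eq_card => u.
by rewrite !in_nbhd1 /add_edge (negbTE av) (negbTE aw) !orbF.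
Qed.

Lemma deg_outside F W a :
  (forall a b, F a b -> a \in W) -> a \notin W -> deg F a = 0.
Proof.
move=> FW aW; apply/eqP; rewrite cards_eq0; apply/eqP/setP => u.
by rewrite in_nbhd1 inE; apply: contraNF aW => /FW.
Qed.

Lemma tree_on_add_leaf F W v w :
  tree_on F W -> v \notin W -> w \in W -> tree_on (add_edge F v w) (v |: W).
Proof.
move=> [[Fsym Firr] FW Fconn Facyc] vW wW.
have vw : v != w by apply: contraNneq vW => ->.
set E := add_edge F v w.
have Esym : symmetric E := add_edge_sym v w Fsym.
have Ev u : E v u = (u == w).
  rewrite /E /add_edge eqxx (negbTE vw) orbF /=.
  by case Fvu: (F v u) => //; move: vW; rewrite (FW _ _ Fvu).
have FE : subrel (connect F) (connect E).
  by apply: connect_sub => a b Fab; apply: connect1; rewrite /E /add_edge Fab.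
split.
- split=> // a; rewrite /E /add_edge Firr /=.
  by case: (a =P v) => [->|_]; rewrite ?(negbTE vw) ?andbF.
- move=> a b; rewrite /E /add_edge !inE => /or3P[/FW->|/andP[->]|/andP[/eqP->]];
  by rewrite ?wW ?orbT.
- have Evw : connect E v w by apply: connect1; rewrite Ev.
  have Ewv : connect E w v by apply: connect1; rewrite Esym Ev.
  move=> a b; rewrite !inE => /predU1P[->|aW] /predU1P[->|bW].
  + exact: connect0.
  + exact: connect_trans Evw (FE _ _ (Fconn _ _ wW bW)).
  + exact: connect_trans (FE _ _ (Fconn _ _ aW wW)) Ewv.
  + exact: FE _ _ (Fconn _ _ aW bW).
- move=> [x [p [uniq_c size_p path_p last_p]]].
  have cyc : cycle E (x :: p) by rewrite /= rcons_path path_p last_p.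
  have [vc|vNc] := boolP (v \in x :: p).
    have [a [b [ab Eva Ebv]]] := uniq_cycle_nbrs uniq_c size_p cyc vc.
    by rewrite [E b v]Esym !Ev in Eva Ebv; rewrite (eqP Eva) (eqP Ebv) eqxx in ab.
  have EF : {in predC1 v &, subrel E F}.
    by move=> a b /= av bv; rewrite /E /add_edge (negbTE av) (negbTE bv) !andbF !orbF.
  apply: Facyc; exists x, p; split=> //.
    by apply: sub_in_path EF _ _ _ path_p; rewrite all_predC has_pred1.
  apply: EF last_p; first by apply: contraNneq vNc => <-; rewrite mem_last.
  by apply: contraNneq vNc => <-; rewrite mem_head.
Qed.

Lemma deg_add_leaf F W v w :
  (forall a b, F a b -> a \in W) -> v \notin W -> deg (add_edge F v w) v <= 1.
Proof. by move=> FW vW; rewrite (leq_trans (deg_add_edge_le _ _ _ _)) // (deg_outside FW). Qed.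

Lemma tree_on_edgeless W : #|W| <= 1 -> tree_on [rel _ _ | false] W.
Proof.
move=> W1; split=> //; last by case=> x [[|a p] []].
by move=> a b aW bW; rewrite (card_le1_eqP W1 a b aW bW) connect0.
Qed.

Lemma tree_on_setT F : tree_on F setT -> is_tree F.
Proof. by case=> Fsimple _ Fconn Facyc; split=> // a b; apply: Fconn. Qed.

End Trees.

Section Bipartite.
Variables (V : finType) (G : rel V) (X Y : {set V}).
Hypothesis bipG : bipartition G X Y.

Lemma bip_memX u : (u \in X) = (u \notin Y).
Proof.
case: bipG => /setP XIY /setP XUY _; have := XIY u; have := XUY u.
by rewrite !inE; case: (u \in X); case: (u \in Y).
Qed.

Lemma bip_edgeYX y x : G y x -> y \in Y -> x \in X.
Proof.
case: bipG => _ _ /[apply] /orP[/andP[+ _]|/andP[_ //]].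
by rewrite bip_memX => /negbTE->.
Qed.

Lemma bip_edgeXY x y : G x y -> x \in X -> y \in Y.
Proof.
case: bipG => _ _ /[apply] /orP[/andP[_ //]|/andP[+ _]].
by rewrite bip_memX => ->.
Qed.

Section CommonNeighbours.
Variable k : nat.
Hypotheses (k_gt0 : 0 < k) (G_sym : symmetric G) (degX : {in X, forall x, deg G x <= k})
  (commonY : {in Y &, forall y z, y != z -> k <= #|nbhd1 G y :&: nbhd1 G z|}).

Section DisjointPair.
Variables A B : {set V}.
Hypotheses (AY : A \subset Y) (BY : B \subset Y) (disjAB : [disjoint A & B]).

Lemma card_nbrs_disjoint_le x :
  x \in X -> #|[set y in A | G y x]| + #|[set y in B | G y x]| <= k.
Proof.
move=> xX; apply: leq_trans (degX xX).
have -> : #|[set y in A | G y x]| + #|[set y in B | G y x]|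
          = #|[set y in A | G y x] :|: [set y in B | G y x]|.
  rewrite cardsU (_ : _ :&: _ = set0) ?cards0 ?subn0 //; apply/setP => y.
  by rewrite !inE; case yA: (y \in A); rewrite ?(disjointFr disjAB yA) ?andbF.
apply: subset_leq_card; apply/subsetP => y.
by rewrite in_nbhd1 G_sym !inE => /orP[] /andP[].
Qed.

Lemma common_nbhd_weight :
  k * (#|A| * #|B|) <=
  \sum_(x in nbhd G A :&: nbhd G B) #|[set y in A | G y x]| * #|[set y in B | G y x]|.
Proof.
set C := nbhd G A :&: nbhd G B.
have -> : \sum_(x in C) #|[set y in A | G y x]| * #|[set y in B | G y x]|
          = \sum_x #|[set y in A | G y x]| * #|[set y in B | G y x]|.
  rewrite [RHS](bigID [in C]) /= [R in _ = _ + R]big1 ?addn0 // => x.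
  rewrite in_setI !in_nbhd_card negb_and -!leqNgt !leqn0.
  by case/orP=> /eqP->; rewrite ?muln0.
rewrite -double_count mulnCA [k * _]mulnC -sum_nat_const -sum_nat_const.
apply: leq_sum => y yA; apply: leq_sum => z zB; apply: leq_trans (commonY _ _ _) _.
- exact: subsetP AY y yA.
- exact: subsetP BY z zB.
- by apply: contraTneq zB => <-; rewrite (disjointFr disjAB yA).
by apply: subset_leq_card; apply/subsetP => x; rewrite in_setI !in_nbhd1 inE.
Qed.

End DisjointPair.

Lemma card_common_nbhd1 (S : {set V}) z :
  S \subset Y -> z \in Y -> z \notin S ->
  k * #|S| <= (k - 1) * #|nbhd G S :&: nbhd1 G z|.
Proof.
move=> SY zY zS; have zY' : [set z] \subset Y by rewrite sub1set.
have dSz : [disjoint S & [set z]] by rewrite disjoint_sym disjoints1.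
have := common_nbhd_weight SY zY' dSz; rewrite cards1 muln1 => /leq_trans; apply.
rewrite mulnC -sum_nat_const; apply: leq_sum => x /setIP[_ zx].
have xX : x \in X.
  move: zx; rewrite in_nbhd_card card_gt0 => /set0Pn[y /setIdP[/set1P-> Gzx]].
  exact: bip_edgeYX Gzx zY.
have b1 : #|[set y in [set z] | G y x]| = 1.
  apply/eqP; rewrite eqn_leq -in_nbhd_card zx andbT -(cards1 z).
  by apply/subset_leq_card/subsetP => y /setIdP[].
have := card_nbrs_disjoint_le dSz xX; rewrite b1 addn1 muln1.
by move/(leq_sub2r 1); rewrite subn1.
Qed.

Lemma card_common_nbhd (A B : {set V}) :
  A \subset Y -> B \subset Y -> [disjoint A & B] ->
  2 * #|A| * #|B| <= (k - 1) * #|nbhd G A :&: nbhd G B|.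
Proof.
move=> AY BY dAB; rewrite -(leq_pmul2l k_gt0) -mulnA mulnCA.
apply: leq_trans (leq_mul (leqnn 2) (common_nbhd_weight AY BY dAB)) _.
have -> : k * ((k - 1) * #|nbhd G A :&: nbhd G B|)
          = \sum_(x in nbhd G A :&: nbhd G B) k * (k - 1) by rewrite sum_nat_const; nia.
rewrite big_distrr; apply: leq_sum => x /setIP[]; rewrite !in_nbhd_card => a_gt0 b_gt0.
have xX : x \in X.
  move: a_gt0; rewrite card_gt0 => /set0Pn[y /setIdP[yA /bip_edgeYX]]; apply.
  exact: subsetP AY y yA.
exact: double_mul_le a_gt0 b_gt0 (card_nbrs_disjoint_le dAB xX).
Qed.

Definition admissible_tree (F : rel V) (W : {set V}) : Prop :=
  [/\ tree_on F W, subgraph F G & {in X, forall x, deg F x <= 2}].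

Lemma admissible_edgeless (W : {set V}) :
  #|W| <= 1 -> admissible_tree [rel _ _ | false] W.
Proof.
split=> //; first exact: tree_on_edgeless.
by move=> x _; rewrite (@deg_outside _ _ set0) ?inE.
Qed.

Lemma admissible_add_leaf F W v w :
  admissible_tree F W -> v \notin W -> w \in W -> G v w ->
  (w \in X -> deg F w <= 1) -> admissible_tree (add_edge F v w) (v |: W).
Proof.
case=> Ftree FG Fdeg vW wW Gvw w_deg; split; first exact: tree_on_add_leaf.
  move=> a b /or3P[/FG //|/andP[/eqP-> /eqP->] //|/andP[/eqP-> /eqP->]].
  by rewrite G_sym.
have [_ FW _ _] := Ftree; move=> x; have [->|xv] := eqVneq x v => [_|].
  by rewrite (leq_trans (deg_add_leaf w FW vW)).
have [->|xw] := eqVneq x w => xX.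
  by rewrite (leq_trans (deg_add_edge_le _ _ _ _)) // ltnS w_deg.
by rewrite deg_add_edge_other ?Fdeg.
Qed.

Lemma admissible_cover_Y F (S U : {set V}) :
  S \subset Y -> U \subset X -> #|U| < #|S| -> admissible_tree F (S :|: U) ->
  exists F' (U' : {set V}), admissible_tree F' (Y :|: U').
Proof.
have [n] := ubnP #|Y :\: S|; elim: n F S U => // n IH F S U ltS SY UX US FSU.
have [YS|[z]] := set_0Vmem (Y :\: S).
  exists F, U; suff -> : Y = S by [].
  by apply/eqP; rewrite eqEsubset SY andbT -setD_eq0 YS.
rewrite inE => /andP[zS zY].
(* |N(S) :&: N(z)| >= k|S|/(k-1) > |S| > |U|, so z has a common neighbour with S
   outside the current tree. *)
have [x /setIP[xS Gzx] xU] : exists2 x, x \in nbhd G S :&: nbhd1 G z & x \notin U.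
  apply/subsetPn/negP => /subset_leq_card CU.
  have := leq_mul (leqnn (k - 1)) CU; have := card_common_nbhd1 SY zY zS; nia.
move: xS; rewrite inE => /exists_inP[y yS Gyx]; rewrite in_nbhd1 in Gzx.
have yY := subsetP SY y yS; have xX := bip_edgeYX Gyx yY.
have xSU : x \notin S :|: U.
  by rewrite inE negb_or xU andbT (contra (subsetP SY x)) // -bip_memX.
have ySU : y \in S :|: U by rewrite inE yS.
have Gxy : G x y by rewrite G_sym.
have yNX : y \in X = false by rewrite bip_memX yY.
have y_deg : y \in X -> deg F y <= 1 by rewrite yNX.
have FSU1 := admissible_add_leaf FSU xSU ySU Gxy y_deg.
have zNX : z \in X = false by rewrite bip_memX zY.
have zSU1 : z \notin x |: (S :|: U).
  rewrite in_setU1 in_setU (negbTE zS) /= negb_or.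
  by rewrite (contraFneq _ zNX) => [|->] //; rewrite (contraFN _ zNX) // => /(subsetP UX).
have [[_ FW _ _] _ _] := FSU.
have x_deg : x \in X -> deg (add_edge F x y) x <= 1 by rewrite (deg_add_leaf _ FW).
have FSU2 := admissible_add_leaf FSU1 zSU1 (setU11 x _) Gzx x_deg.
apply: (IH _ (z |: S) (x |: U)).
- by rewrite setUC -setDDl (leq_trans (card_setD1_lt _)) // inE zS.
- by rewrite subUset sub1set zY.
- by rewrite subUset sub1set xX.
- by rewrite !cardsU1 zS xU.
- by rewrite -setUA [S :|: _]setUCA; exact: FSU2.
Qed.

Lemma admissible_cover_X F (W : {set V}) :
  {in X, forall x, exists y, G x y} -> Y \subset W -> admissible_tree F W ->
  exists F', admissible_tree F' setT.
Proof.
move=> X_nbr; have [n] := ubnP #|~: W|; elim: n F W => // n IH F W ltW YW FW.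
have [W0|[v]] := set_0Vmem (~: W).
  by exists F; rewrite -(setCK W) W0 setC0 in FW.
rewrite inE => vW; have vX : v \in X by rewrite bip_memX (contra (subsetP YW v) vW).
have [y Gvy] := X_nbr v vX; have yY := bip_edgeXY Gvy vX.
apply: (IH (add_edge F v y) (v |: W)).
- by rewrite setCU setIC -setDE (leq_trans (card_setD1_lt _)) // inE.
- by rewrite subsetU // YW orbT.
- apply: admissible_add_leaf => //; first exact: subsetP YW y yY.
  by rewrite bip_memX yY.
Qed.

Lemma exists_spanning_tree :
  {in X, forall x, exists y, G x y} ->
  exists F, spanning_tree G F /\ {in X, forall x, deg F x <= 2}.
Proof.
move=> X_nbr.
have [F [U FYU]] : exists F (U : {set V}), admissible_tree F (Y :|: U).
  have [Y0|[y0 y0Y]] := set_0Vmem Y.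
    exists [rel _ _ | false], set0; rewrite Y0 setU0.
    by apply: admissible_edgeless; rewrite cards0.
  apply: (@admissible_cover_Y _ [set y0] set0); rewrite ?sub1set ?sub0set ?cards0 ?cards1 //.
  by apply: admissible_edgeless; rewrite setU0 cards1.
have [F' [F'tree F'G F'deg]] := admissible_cover_X X_nbr (subsetUl Y U) FYU.
by exists F'; split=> //; split=> //; apply: tree_on_setT.
Qed.

End CommonNeighbours.
End Bipartite.

Local Open Scope ring_scope.

Lemma natr_div_pred_le (R : numFieldType) (a m k : nat) :
  (1 < k)%N -> (a <= (k - 1) * m)%N -> a%:R / (k%:R - 1) <= m%:R :> R.
Proof.
move=> k_gt1 le_am; have -> : k%:R - 1 = (k - 1)%:R :> R by rewrite natrB // ltnW.
by rewrite ler_pdivrMr ?ltr0n ?subn_gt0 // -natrM ler_nat mulnC.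
Qed.

Theorem lemma2p4 (V : finType) (G : rel V) (X Y : {set V}) (c k : nat) :
  simple_graph G ->
  bipartition G X Y ->
  (3 <= c)%N -> (c <= k)%N ->
  (forall x, x \in X -> (c <= deg G x)%N && (deg G x <= k)%N) ->
  (forall y z, y \in Y -> z \in Y -> y != z ->
     (k <= #|nbhd1 G y :&: nbhd1 G z|)%N) ->
  [/\ (forall y, y \in Y ->
         (k%:Q * (#|Y|%:Q - 1) / (k%:Q - 1) <= (#|nbhd1 G y|)%:Q)),
      (forall B : {set V}, B \subset Y ->
         (2 * #|B|%:Q * (#|Y|%:Q - #|B|%:Q) / (k%:Q - 1)
            <= (#|nbhd G B :&: nbhd G (Y :\: B)|)%:Q))
    & ((mu G X)%:Q * (k%:Q - 1)
          * ((2%:Q) ^ (k%:Z - c%:Z - 1) - (2%:Q) ^+ c + 1) <= #|Y|%:Q ->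
       exists F : rel V, spanning_tree G F /\
         (forall x, x \in X -> (deg F x <= 2)%N))].
Proof.
move=> [G_sym _] bipG c_ge3 le_ck degG commonY.
have k_gt1 : (1 < k)%N by apply: leq_trans le_ck; apply: leq_trans c_ge3.
have degX : {in X, forall x, deg G x <= k}%N by move=> x /degG /andP[].
split.
- move=> y yY.
  have le_Sy := card_common_nbhd1 bipG G_sym degX commonY (subD1set Y y) yY
    (negbT (setD11 y Y)).
  have -> : #|Y|%:Q - 1 = #|Y :\ y|%:R.
    by rewrite (cardsD1 y Y) yY add1n -pmulrn -natr1 addrK.
  rewrite -!pmulrn -natrM natr_div_pred_le // (leq_trans le_Sy) // leq_mul2l.
  by rewrite subset_leq_card ?orbT ?subsetIr.
- move=> B BY.
  have dB : [disjoint B & Y :\: B].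
    by rewrite disjoint_sym; apply/setDidPl; rewrite setDDl setUid.
  have le_BY := card_common_nbhd bipG (ltnW k_gt1) G_sym degX commonY BY (subsetDl Y B) dB.
  have -> : 2 * #|B|%:Q * (#|Y|%:Q - #|B|%:Q) = (2 * #|B| * #|Y :\: B|)%:R.
    by rewrite cardsD (setIidPr BY) !natrM natrB ?subset_leq_card // -!pmulrn.
  by rewrite -!pmulrn natr_div_pred_le.
- (* The greedy construction needs no lower bound on |Y|. *)
  move=> _; apply: (exists_spanning_tree bipG (ltnW k_gt1) G_sym degX commonY).
  move=> x /degG /andP[c_le _].
  have : (0 < deg G x)%N by apply: leq_trans c_le; apply: leq_trans c_ge3.
  by rewrite card_gt0 => /set0Pn[y]; rewrite in_nbhd1; exists y.
Qed.
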